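(* Let $a,b\in\mathbb{R}^n$. (a) Let $r>0$ and $p\in(1,2]$. Then for all $a,b\in\mathbb{B}(0;r)$, $$\langle \|a\|^{p-2}a-\|b\|^{p-2}b,\ a-b\rangle\ \ge\ \kappa_p\, r^{p-2}\,\|a-b\|^2 .$$ (b) Let $r>0$, $p\ge 2$ and $s=\frac{p}{p-1}$. Then for all $a,b\in\mathbb{B}(0;r)$, $$\big\|\,\|a\|^{p-2}a-\|b\|^{p-2}b\,\big\|\ \le\ \frac{2r^{p-2}}{\kappa_s}\,\|a-b\| .$$
   Context: $\|\cdot\|$ is the Euclidean norm on $\mathbb{R}^n$ and $\mathbb{B}(0;r)$ the open ball of radius $r$ about the origin. The convention $\|0\|^{p-2}\,0=0$ is used (also for $p<2$). The function $\kappa:(1,2]\to(0,\infty)$, $t\mapsto\kappa_t$, is defined by $\kappa_t=\frac{(2+\sqrt3)(t-1)}{16}$ for $t\in(1,\hat t]$, $\kappa_t=\frac{2+\sqrt3}{16}\big(1-(3-\sqrt3)^{1-t}\big)$ for $t\in[\hat t,2)$, and $\kappa_2=1$, where $\hat t\approx 1.3214$ is the solution in $(1,2]$ of $\frac{t(t-1)}{2}=1-\Big[1+\frac{(2-\sqrt3)t}{t-1}\Big]^{1-t}$. *)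

From HB Require Import structures.
From mathcomp Require Import all_boot all_order all_algebra.
From mathcomp Require Import all_classical all_reals all_analysis.
Set Implicit Arguments. Unset Strict Implicit. Unset Printing Implicit Defensive.
Import Order.TTheory GRing.Theory Num.Theory.
Local Open Scope classical_set_scope.
Local Open Scope ring_scope.

Section Defs.
Variable R : realType.

Definition dotv (n : nat) (a b : 'rV[R]_n) : R := \sum_(i < n) a ord0 i * b ord0 i.
Definition normv (n : nat) (a : 'rV[R]_n) : R := Num.sqrt (dotv a a).

(* a |-> ||a||^{p-2} a, with the convention ||0||^{p-2} 0 = 0
   (automatic since the vector factor is 0) *)
Definition plap (p : R) (n : nat) (a : 'rV[R]_n) : 'rV[R]_n :=
  (normv a `^ (p - 2)) *: a.

Definition hat_t_eq (t : R) : Prop :=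
  t * (t - 1) / 2 = 1 - (1 + (2 - Num.sqrt 3) * t / (t - 1)) `^ (1 - t).

Definition hat_t : R := xget 1 [set t : R | 1 < t <= 2 /\ hat_t_eq t].

(* kappa_t for t in (1,2] (values outside (1,2] are irrelevant) *)
Definition kappa (t : R) : R :=
  if t == 2 then 1
  else if t <= hat_t then (2 + Num.sqrt 3) * (t - 1) / 16
  else (2 + Num.sqrt 3) / 16 * (1 - (3 - Num.sqrt 3) `^ (1 - t)).

End Defs.

(* Assume |b| <= |a| and put x = |a|, y = |b|, al = x^(p-2), be = y^(p-2), so that
   plap a - plap b = al (a - b) + (al - be) b.  Both parts rest on Bernoulli's
   inequality for t |-> t^(p-1), which is convex for p >= 2 and concave for p <= 2.
   (b) The triangle inequality bounds the norm by al |a - b| + (al - be) y, and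
   Bernoulli gives (al - be) y <= (p - 2) al (x - y) <= (p - 2) al |a - b|, so the
   Lipschitz constant is (p - 1) r^(p-2).
   (a) Expanding the inner product leaves a quadratic inequality in |a - b| whose
   input is the concave Bernoulli bound x^(p-1) - y^(p-1) >= (p - 1) x^(p-2) (x - y);
   the monotonicity constant is p - 1. *)

From HB Require Import structures.
From mathcomp Require Import all_boot all_order all_algebra.
From mathcomp Require Import all_classical all_reals all_analysis.
From mathcomp Require Import ring lra.
Set Implicit Arguments.
Unset Strict Implicit.
Unset Printing Implicit Defensive.
Import Order.TTheory GRing.Theory Num.Theory.
Local Open Scope ring_scope.

Section PLaplacian.
Variable R : realType.
Implicit Types x y p q s e t : R.

Lemma le0_ger_powR e : e <= 0 ->
  {in Num.pos &, {homo (@powR R) ^~ e : a b / a <= b >-> b <= a}}.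
Proof.
move=> e0 x y x0 y0 xy; rewrite /powR !gt_eqF // ler_expR ler_wnM2l //.
by rewrite ler_ln.
Qed.

Lemma ln_le_subr1 s : 0 < s -> ln s <= s - 1.
Proof. by move=> s0; have := @le_ln1Dx R (s - 1); rewrite [1 + _]addrC subrK; apply; lra. Qed.

Lemma powR_le_tangent s e : 0 < s -> 0 <= e <= 1 -> s `^ e <= 1 + e * (s - 1).
Proof.
move=> s0 /andP[e0 e1]; set t := Itv01 e0 e1.
have := concave_ln t s0 ltr01; rewrite -ler_expR lnK ?posrE ?convR_gt0 //.
rewrite !convRE /= ln1 mulr0 addr0 mulr1 /powR gt_eqF //.
by have -> : 1 + e * (s - 1) = e * s + (1 - e) by ring.
Qed.

Lemma le0_powR_ge_tangent s e : 0 < s -> e <= 0 -> 1 + e * (s - 1) <= s `^ e.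
Proof.
move=> s0 e0; rewrite /powR gt_eqF //; apply: le_trans (expR_ge1Dx _).
by rewrite lerD2l ler_wnM2l // ln_le_subr1.
Qed.

Lemma ge1_powR_ge_tangent s e : 0 < s -> 1 <= e -> 1 + e * (s - 1) <= s `^ e.
Proof.
move=> s0 e1; have e0 : 0 < e by lra.
have e01 : 0 <= e^-1 <= 1 by rewrite invr_ge0 (ltW e0) invf_le1.
have := powR_le_tangent (powR_gt0 e s0) e01.
rewrite -powRrM mulfV ?gt_eqF // (powRr1 (ltW s0)) => h.
have := ler_wpM2l (ltW e0) h; rewrite mulrDr mulr1 mulrA mulfV ?gt_eqF //; lra.
Qed.

Lemma mulr_powR_subr2 x p : 0 <= x -> 1 < p -> x `^ (p - 2) * x = x `^ (p - 1).
Proof.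
move=> x0 p1; have -> : p - 2 = p - 1 - 1 by ring.
by rewrite mulrC mulr_powRB1 ?subr_gt0.
Qed.

Lemma powR_concave_gap x y p : 0 < x -> 0 < y -> 1 < p <= 2 ->
  (p - 1) * x `^ (p - 2) * (x - y) <= x `^ (p - 2) * x - y `^ (p - 2) * y.
Proof.
move=> x0 y0 /andP[p1 p2]; set s := y / x.
have s0 : 0 < s by rewrite divr_gt0.
have ys : y = x * s by rewrite mulrC divfK ?gt_eqF.
have hs := @powR_le_tangent s (p - 1) s0 ltac:(apply/andP; split; lra).
have x0' := ltW x0; have y0' := ltW y0; have s0' := ltW s0.
rewrite !mulr_powR_subr2 // {2}ys powRM //.
have -> : (p - 1) * x `^ (p - 2) * (x - y) = (p - 1) * x `^ (p - 1) * (1 - s).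
  by rewrite -mulr_powR_subr2 // ys; ring.
have := ler_wpM2l (powR_ge0 x (p - 1)) hs; lra.
Qed.

Lemma powR_convex_gap x y q : 0 <= y -> y <= x -> 0 <= q ->
  (x `^ q - y `^ q) * y <= q * x `^ q * (x - y).
Proof.
move=> y0 yx q0; have x0 := le_trans y0 yx.
have [->|y_neq0] := eqVneq y 0.
  by rewrite mulr0 !mulr_ge0 ?powR_ge0 ?subr0.
have ypos : 0 < y by rewrite lt_def y_neq0.
have xpos : 0 < x by apply: lt_le_trans yx.
set s := y / x; have s0 : 0 < s by rewrite divr_gt0.
have s0' := ltW s0.
have ys : y = x * s by rewrite mulrC divfK ?gt_eqF.
have := @ge1_powR_ge_tangent s (q + 1) s0 ltac:(lra).
rewrite -mulr_powRB1 ?addrK //; last lra; move=> hs.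
rewrite ys powRM //.
have hxq := mulr_ge0 (powR_ge0 x q) x0.
have -> : (x `^ q - x `^ q * s `^ q) * (x * s) = x `^ q * x * ((1 - s `^ q) * s) by ring.
have -> : q * x `^ q * (x - x * s) = x `^ q * x * (q * (1 - s)) by ring.
by apply: ler_wpM2l => //; lra.
Qed.

Lemma kappa_bounds t : 1 < t <= 2 -> 0 < kappa t <= t - 1.
Proof.
move=> /andP[t1 t2].
have s3 : Num.sqrt 3 ^+ 2 = 3 :> R by rewrite sqr_sqrtr.
have s0 : 0 <= Num.sqrt 3 :> R by rewrite sqrtr_ge0.
set s := Num.sqrt 3 in s3 s0 *.
have [s1 s2] : 1 < s /\ s < 2 by split; nra.
have c0 : 0 < (2 + s) / 16 < 1 by apply/andP; split; lra.
rewrite /kappa -/s; case: eqVneq => [->|_]; first lra.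
case: ifP => _; first by rewrite mulrAC; apply/andP; split; nra.
set z := 3 - s; have [z1 z2] : 1 < z /\ z < 2 by rewrite /z; split; lra.
have z0 : 0 < z by lra.
have w1 : z `^ (1 - t) < 1.
  by rewrite /powR gt_eqF // expR_lt1 nmulr_rlt0 ?ln_gt0 //; lra.
have w2 := @le0_powR_ge_tangent z (1 - t) z0 ltac:(lra).
have w3 : 1 - z `^ (1 - t) <= t - 1 by nra.
apply/andP; split; nra.
Qed.

(* Part (a) in the coordinates x = |a|, y = |b|, d = |a - b|, m = <a, b>,
   al = |a|^(p-2), be = |b|^(p-2), c = (p - 1) r^(p-2). *)
Lemma ler_plap_radial x y d m al be c : y <= x -> (x - y) ^+ 2 <= d ^+ 2 ->
  d ^+ 2 = x ^+ 2 - 2 * m + y ^+ 2 -> c <= al <= be -> c * (x - y) <= al * x - be * y ->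
  c * d ^+ 2 <= al * x ^+ 2 + be * y ^+ 2 - (al + be) * m.
Proof.
move=> yx hxy hd /andP[c_al al_be] hc.
have h1 : (be - al) * (x + y) <= (al + be - 2 * c) * (x - y) by nra.
have h2 : (be - al) * (x + y) * (x - y) <= (al + be - 2 * c) * (x - y) ^+ 2.
  by rewrite expr2 mulrA; apply: ler_wpM2r => //; lra.
have h3 : (al + be - 2 * c) * (x - y) ^+ 2 <= (al + be - 2 * c) * d ^+ 2.
  by apply: ler_wpM2l => //; lra.
nra.
Qed.

Section Euclidean.
Variable n : nat.
Implicit Types a b c : 'rV[R]_n.

Lemma dotvC a b : dotv a b = dotv b a.
Proof. by apply: eq_bigr => i _; rewrite mulrC. Qed.

Lemma dotvDl a b c : dotv (a + b) c = dotv a c + dotv b c.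
Proof. by rewrite /dotv -big_split; apply: eq_bigr => i _; rewrite !mxE mulrDl. Qed.

Lemma dotvZl k a b : dotv (k *: a) b = k * dotv a b.
Proof. by rewrite /dotv mulr_sumr; apply: eq_bigr => i _; rewrite !mxE mulrA. Qed.

Lemma dotvNl a b : dotv (- a) b = - dotv a b.
Proof. by rewrite -scaleN1r dotvZl mulN1r. Qed.

Lemma dotvBl a b c : dotv (a - b) c = dotv a c - dotv b c.
Proof. by rewrite dotvDl dotvNl. Qed.

Lemma dotvDr a b c : dotv a (b + c) = dotv a b + dotv a c.
Proof. by rewrite dotvC dotvDl !(dotvC a). Qed.

Lemma dotvZr k a b : dotv a (k *: b) = k * dotv a b.
Proof. by rewrite dotvC dotvZl dotvC. Qed.

Lemma dotvNr a b : dotv a (- b) = - dotv a b.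
Proof. by rewrite dotvC dotvNl dotvC. Qed.

Lemma dotvBr a b c : dotv a (b - c) = dotv a b - dotv a c.
Proof. by rewrite dotvDr dotvNr. Qed.

Lemma dotv0l a : dotv 0 a = 0.
Proof. by rewrite /dotv big1 // => i _; rewrite mxE mul0r. Qed.

Lemma dotv0r a : dotv a 0 = 0.
Proof. by rewrite dotvC dotv0l. Qed.

Lemma dotvv_ge0 a : 0 <= dotv a a.
Proof. by apply: sumr_ge0 => i _; rewrite -expr2 sqr_ge0. Qed.

Lemma dotvv_eq0 a : dotv a a = 0 -> a = 0.
Proof.
move=> /psumr_eq0P sq0; apply/rowP => i; rewrite mxE; apply/eqP.
by rewrite -sqrf_eq0 expr2 sq0 // => j _; rewrite -expr2 sqr_ge0.
Qed.

Lemma normv_ge0 a : 0 <= normv a.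
Proof. exact: sqrtr_ge0. Qed.

Lemma normv_sqr a : normv a ^+ 2 = dotv a a.
Proof. by rewrite sqr_sqrtr // dotvv_ge0. Qed.

Lemma normv_eq0 a : normv a = 0 -> a = 0.
Proof. by move=> a0; apply: dotvv_eq0; rewrite -normv_sqr a0 expr0n. Qed.

Lemma normv0 : normv (0 : 'rV[R]_n) = 0.
Proof. by rewrite /normv dotv0l sqrtr0. Qed.

Lemma normv_gt0 a : (0 < normv a) = (a != 0).
Proof.
rewrite lt_def normv_ge0 andbT.
by congr (~~ _); apply/eqP/eqP => [/normv_eq0|->]; rewrite ?normv0.
Qed.

Lemma normvZ k a : normv (k *: a) = `|k| * normv a.
Proof. by rewrite /normv dotvZl dotvZr mulrA -expr2 sqrtrM ?sqr_ge0 // sqrtr_sqr. Qed.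

Lemma normvN a : normv (- a) = normv a.
Proof. by rewrite -scaleN1r normvZ normrN1 mul1r. Qed.

Lemma normvB_sqr a b : normv (a - b) ^+ 2 = normv a ^+ 2 - 2 * dotv a b + normv b ^+ 2.
Proof. by rewrite !normv_sqr dotvBl !dotvBr (dotvC b a); ring. Qed.

Lemma cauchy_schwarz a b : dotv a b <= normv a * normv b.
Proof.
have [/normv_eq0->|a_neq0] := eqVneq (normv a) 0.
  by rewrite dotv0l normv0 mul0r.
have [/normv_eq0->|b_neq0] := eqVneq (normv b) 0.
  by rewrite dotv0r normv0 mulr0.
have xy0 : 0 < normv a * normv b by rewrite mulr_gt0 // lt_def ?a_neq0 ?b_neq0 normv_ge0.
have := dotvv_ge0 (normv b *: a - normv a *: b).
rewrite dotvBl !dotvBr !dotvZl !dotvZr -!normv_sqr (dotvC b a).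
set x := normv a in xy0 *; set y := normv b in xy0 *; set m := dotv a b => h.
have : 0 <= 2 * (x * y) * (x * y - m) by nra.
by rewrite pmulr_rge0 ?subr_ge0 // mulr_gt0.
Qed.

Lemma normvD a b : normv (a + b) <= normv a + normv b.
Proof.
rewrite -ler_sqr ?nnegrE ?addr_ge0 ?normv_ge0 // sqrrD !normv_sqr.
rewrite dotvDl !dotvDr (dotvC b a); have := cauchy_schwarz a b; lra.
Qed.

Lemma normvB_ge a b : normv a - normv b <= normv (a - b).
Proof. by rewrite lerBlDr; apply: le_trans (normvD _ _); rewrite subrK. Qed.

Lemma dotv_scaleB al be a b : dotv (al *: a - be *: b) (a - b) =
  al * normv a ^+ 2 + be * normv b ^+ 2 - (al + be) * dotv a b.
Proof. by rewrite dotvBl !dotvBr !dotvZl (dotvC b a) -!normv_sqr; ring. Qed.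

Lemma plap0 p : plap p (0 : 'rV[R]_n) = 0.
Proof. exact: scaler0. Qed.

Lemma plap_strong_monotone p r a b : 1 < p <= 2 -> normv a <= r -> normv b <= r ->
  (p - 1) * r `^ (p - 2) * normv (a - b) ^+ 2 <= dotv (plap p a - plap p b) (a - b).
Proof.
move=> /andP[p1 p2]; wlog yx : a b / normv b <= normv a => [wlog_ab ha hb|xr _].
  have [ba|/ltW ab] := lerP (normv b) (normv a); first exact: wlog_ab.
  by rewrite -(opprB b) normvN -(opprB (plap p b)) dotvNl dotvNr opprK wlog_ab.
have p20 : p - 2 <= 0 by lra.
have [->|b_neq0] := eqVneq b 0.
  rewrite plap0 !subr0 dotvZl -normv_sqr.
  have [->|a_neq0] := eqVneq a 0; first by rewrite normv0 expr0n /= !mulr0.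
  have xpos : 0 < normv a by rewrite normv_gt0.
  have rx := le0_ger_powR p20 xpos (lt_le_trans xpos xr) xr.
  have r0 := powR_ge0 r (p - 2).
  by apply: ler_wpM2r; [exact: sqr_ge0 | nra].
have ypos : 0 < normv b by rewrite normv_gt0.
have xpos := lt_le_trans ypos yx.
have rpos := lt_le_trans xpos xr.
rewrite dotv_scaleB; apply: (ler_plap_radial yx _ (normvB_sqr a b)).
- by rewrite ler_sqr ?nnegrE ?subr_ge0 ?normv_ge0 // normvB_ge.
- have rx := le0_ger_powR p20 xpos rpos xr.
  have r0 := powR_ge0 r (p - 2).
  by rewrite (le0_ger_powR p20 ypos xpos yx) andbT; nra.
- apply: le_trans (powR_concave_gap xpos ypos _); last by rewrite p1.
  apply: ler_wpM2r; first by rewrite subr_ge0.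
  by apply: ler_wpM2l; [lra | exact: le0_ger_powR].
Qed.

Lemma plap_lipschitz p r a b : 2 <= p -> normv a <= r -> normv b <= r ->
  normv (plap p a - plap p b) <= (p - 1) * r `^ (p - 2) * normv (a - b).
Proof.
move=> p2; wlog yx : a b / normv b <= normv a => [wlog_ab ha hb|xr _].
  have [ba|/ltW ab] := lerP (normv b) (normv a); first exact: wlog_ab.
  by rewrite -(opprB b) -(opprB (plap p b)) !normvN wlog_ab.
have q0 : 0 <= p - 2 by lra.
have y0 := normv_ge0 b; have x0 := le_trans y0 yx; have d0 := normv_ge0 (a - b).
have be_al := ge0_ler_powR q0 y0 x0 yx.
have al_rho := ge0_ler_powR q0 x0 (le_trans x0 xr) xr.
have -> : plap p a - plap p b =
    normv a `^ (p - 2) *: (a - b) + (normv a `^ (p - 2) - normv b `^ (p - 2)) *: b.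
  by rewrite /plap scalerBr scalerBl addrA subrK.
apply: le_trans (normvD _ _) _.
rewrite !normvZ !ger0_norm ?subr_ge0 ?powR_ge0 //.
have gap := powR_convex_gap y0 yx q0.
have gap_d : (p - 2) * normv a `^ (p - 2) * (normv a - normv b)
    <= (p - 2) * normv a `^ (p - 2) * normv (a - b).
  by apply: ler_wpM2l; [exact: mulr_ge0 (powR_ge0 _ _) | exact: normvB_ge].
have : (p - 1) * normv a `^ (p - 2) * normv (a - b)
    <= (p - 1) * r `^ (p - 2) * normv (a - b).
  by apply: ler_wpM2r => //; apply: ler_wpM2l => //; lra.
lra.
Qed.
End Euclidean.

Lemma pred_le_kappa_conj p : 2 <= p -> p - 1 <= 2 / kappa (p / (p - 1)).
Proof.
move=> p2; have p1 : 0 < p - 1 by lra.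
have /andP[k0 k1] : 0 < kappa (p / (p - 1)) <= p / (p - 1) - 1.
  by apply: kappa_bounds; rewrite ltr_pdivlMr ?ler_pdivrMr //; lra.
have := ler_wpM2l (ltW p1) k1.
have -> : (p - 1) * (p / (p - 1) - 1) = 1 by field; lra.
by rewrite ler_pdivlMr //; lra.
Qed.
End PLaplacian.

Theorem lemma2 (R : realType) (n : nat) :
  (forall (r p : R), 0 < r -> 1 < p <= 2 ->
    forall a b : 'rV[R]_n, normv a < r -> normv b < r ->
      kappa p * r `^ (p - 2) * normv (a - b) ^+ 2
        <= dotv (plap p a - plap p b) (a - b)) /\
  (forall (r p : R), 0 < r -> 2 <= p ->
    forall a b : 'rV[R]_n, normv a < r -> normv b < r ->
      normv (plap p a - plap p b)
        <= 2 * r `^ (p - 2) / kappa (p / (p - 1)) * normv (a - b)).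
Proof.
split=> r p _ hp a b /ltW ha /ltW hb.
  apply: le_trans (plap_strong_monotone hp ha hb).
  have /andP[_ k1] := kappa_bounds hp.
  by apply: ler_wpM2r; [exact: sqr_ge0 | exact: (ler_wpM2r (powR_ge0 _ _) k1)].
apply: le_trans (plap_lipschitz hp ha hb) _.
have -> : 2 * r `^ (p - 2) / kappa (p / (p - 1)) * normv (a - b)
    = 2 / kappa (p / (p - 1)) * r `^ (p - 2) * normv (a - b) by ring.
apply: ler_wpM2r; first exact: normv_ge0.
exact: (ler_wpM2r (powR_ge0 _ _) (pred_le_kappa_conj hp)).
Qed.
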